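(* Let $n\ge1$ and let $\Lambda$ be a normal congruence on $E_n$. Then there is $k\in\{1,\dots,n\}$ such that $\Lambda=\iota_{E_n}\cup(E_n^{(k)}\times E_n^{(k)})$.
   Context: Let $X=\{1,\dots,n\}$, $X'=\{1',\dots,n'\}$. $\mathcal{I}^{\ast}_n$ is the set of partitions of $X\cup X'$ all of whose blocks meet both $X$ and $X'$, with product: regard $\alpha$ as a partition of $X\cup X''$ and $\beta$ as a partition of $X''\cup X'$ ($X''$ a third copy of $X$), and let $\alpha\beta$ be the partition of $X\cup X'$ induced by the equivalence on $X\cup X''\cup X'$ generated by the blocks of both; it is an inverse semigroup. $E_n$ is its set of idempotents (the elements all of whose blocks have the form $E\cup E'$); rank = number of blocks; $E_n^{(k)}=\{e\in E_n:\mathrm{rank}(e)\le k\}$; $\iota_{E_n}$ is the identity relation on $E_n$. A congruence $\Lambda$ on the semilattice $E_n$ is normal if $e\Lambda f$ implies $s^{-1}es\,\Lambda\,s^{-1}fs$ for all $s\in\mathcal{I}^{\ast}_n$. *)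

From mathcomp Require Import all_boot.
Set Implicit Arguments. Unset Strict Implicit. Unset Printing Implicit Defensive.

Section Dual.
Variable n : nat.

(* X u X' : inl i = i in X, inr i = i' in X'. *)
Definition pt := ('I_n + 'I_n)%type.
Definition bp := {set {set pt}}.

Definition in_Istar (a : bp) : Prop :=
  partition a [set: pt] /\
  (forall B, B \in a -> (exists i, inl i \in B) /\ (exists j, inr j \in B)).

(* three copies: inl (inl i) = X, inl (inr i) = X'', inr i = X' *)
Definition upt := (('I_n + 'I_n) + 'I_n)%type.
Definition emb_l (x : pt) : upt :=
  match x with inl i => inl (inl i) | inr i => inl (inr i) end.
Definition emb_r (x : pt) : upt :=
  match x with inl i => inl (inr i) | inr i => inr i end.
Definition emb_o (x : pt) : upt :=
  match x with inl i => inl (inl i) | inr i => inr i end.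

Definition prod_edge (a b : bp) : rel upt := fun u v =>
  [exists B in a, exists x in B, exists y in B, (emb_l x == u) && (emb_l y == v)]
  || [exists B in b, exists x in B, exists y in B, (emb_r x == u) && (emb_r y == v)].

(* the product alpha beta: partition of X u X' induced by the equivalence
   generated by the blocks of alpha and beta *)
Definition bpmul (a b : bp) : bp :=
  [set [set t : pt | connect (prod_edge a b) (emb_o s) (emb_o t)] | s : pt].

Definition in_E (e : bp) : Prop := in_Istar e /\ bpmul e e = e.

Definition rank (a : bp) : nat := #|a|.

(* t is an inverse of s (in the inverse semigroup I*_n it is unique: s^{-1}) *)
Definition is_inverse (s t : bp) : Prop :=
  in_Istar t /\ bpmul (bpmul s t) s = s /\ bpmul (bpmul t s) t = t.

Definition E_congruence (L : bp -> bp -> Prop) : Prop :=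
  (forall e f, L e f -> in_E e /\ in_E f) /\
  (forall e, in_E e -> L e e) /\
  (forall e f, L e f -> L f e) /\
  (forall e f g, L e f -> L f g -> L e g) /\
  (forall e f g, L e f -> in_E g -> L (bpmul e g) (bpmul f g) /\ L (bpmul g e) (bpmul g f)).

Definition normal_congruence (L : bp -> bp -> Prop) : Prop :=
  E_congruence L /\
  forall s t e f, in_Istar s -> is_inverse s t -> L e f ->
    L (bpmul (bpmul t e) s) (bpmul (bpmul t f) s).

End Dual.

From mathcomp Require Import all_boot.
From mathcomp Require Import zify.
From Stdlib Require Import Classical.
Set Implicit Arguments. Unset Strict Implicit. Unset Printing Implicit Defensive.

(* Every idempotent is the partition of X u X' into the fibres of i, i' |-> psi i
   for a labelling psi onto {0, .., rank - 1}, and products of such labelled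
   elements are computed by joining fibres on the middle copy.  If e L f with
   e <> f, some i, j lie in one block of f but in different blocks of e (or
   vice versa); multiplying by the idempotent joining i and j relates e to the
   idempotent obtained by gluing two of its blocks.  Conjugation transports this
   gluing to every idempotent of no larger rank, and chains of gluings relate
   all of them to the one-block idempotent.  So the nontrivial classes of L form
   the single class E_n^(k), k being the largest rank at which gluings are
   L-related. *)

Section Labellings.
Variable n : nat.
Implicit Types (a b c d psi phi : 'I_n -> nat) (l : pt n -> nat).

Definition fibres (T : eqType) (l : pt n -> T) : bp n := preim_partition l [set: pt n].

Definition lab2 a b (x : pt n) : nat := match x with inl i => a i | inr i => b i end.

Definition fibres2 a b : bp n := fibres (lab2 a b).

Definition idem psi : bp n := fibres2 psi psi.

Definition one_block : bp n := idem (fun=> 0).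

Definition img_le a b := forall i, exists j, a i = b j.

Definition labels_onto psi r :=
  (forall k, psi k < r) /\ (forall v, v < r -> exists k, psi k = v).

Definition glue (x y v : nat) : nat := if v == y then x else v.

Definition mid (j : 'I_n) : upt n := inl (inr j).

Lemma fibresE (T : eqType) (l : pt n -> T) :
  fibres l = [set [set t | l s == l t] | s : pt n].
Proof.
apply/setP => B; apply/imsetP/imsetP => -[s _ ->]; exists s => //.
  by apply/setP => t; rewrite !inE.
by apply/setP => t; rewrite !inE.
Qed.

Lemma eq_fibres (T T' : eqType) (l : pt n -> T) (l' : pt n -> T') :
  (forall x y, (l x == l y) = (l' x == l' y)) -> fibres l = fibres l'.
Proof.
by move=> Hll'; rewrite !fibresE; apply: eq_imset => s; apply/setP => t; rewrite !inE.
Qed.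

Lemma eq_fibres2 a b a' b' : a =1 a' -> b =1 b' -> fibres2 a b = fibres2 a' b'.
Proof. by move=> Ha Hb; apply: eq_fibres => [[i|i] [j|j]] /=; rewrite ?Ha ?Hb. Qed.

Lemma img_le_refl a : img_le a a.
Proof. by move=> i; exists i. Qed.

Lemma img_le_onto a b r : (forall i, a i < r) -> labels_onto b r -> img_le a b.
Proof. by move=> Ha [_ ontob] i; have [j] := ontob _ (Ha i); exists j. Qed.

Lemma prod_edgeL (e f : bp n) B x y : B \in e -> x \in B -> y \in B ->
  prod_edge e f (emb_l x) (emb_l y).
Proof.
move=> eB xB yB; apply/orP; left; apply/existsP; exists B; rewrite eB /=.
by apply/existsP; exists x; rewrite xB /=; apply/existsP; exists y; rewrite yB !eqxx.
Qed.

Lemma prod_edgeR (e f : bp n) B x y : B \in f -> x \in B -> y \in B ->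
  prod_edge e f (emb_r x) (emb_r y).
Proof.
move=> fB xB yB; apply/orP; right; apply/existsP; exists B; rewrite fB /=.
by apply/existsP; exists x; rewrite xB /=; apply/existsP; exists y; rewrite yB !eqxx.
Qed.

Lemma fibres_mem (T : eqType) (l : pt n -> T) x y :
  l x = l y -> exists2 B, B \in fibres l & (x \in B) && (y \in B).
Proof.
by move=> lxy; exists [set t | l x == l t]; rewrite ?fibresE ?imset_f // !inE lxy eqxx.
Qed.

Lemma prod_edge_fibresL l1 l2 x y : l1 x = l1 y ->
  prod_edge (fibres l1) (fibres l2) (emb_l x) (emb_l y).
Proof. by case/fibres_mem => B eB /andP[]; apply: prod_edgeL. Qed.

Lemma prod_edge_fibresR l1 l2 x y : l2 x = l2 y ->
  prod_edge (fibres l1) (fibres l2) (emb_r x) (emb_r y).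
Proof. by case/fibres_mem => B eB /andP[]; apply: prod_edgeR. Qed.

Lemma prod_edge_fibresP l1 l2 u v : prod_edge (fibres l1) (fibres l2) u v ->
  (exists x y, [/\ l1 x = l1 y, u = emb_l x & v = emb_l y]) \/
  (exists x y, [/\ l2 x = l2 y, u = emb_r x & v = emb_r y]).
Proof.
rewrite !fibresE.
case/orP => /existsP [_ /andP [/imsetP [s _ ->] /existsP [x /andP [+ /existsP
  [y /andP [+ /andP [/eqP <- /eqP <-]]]]]]]; rewrite !inE => /eqP sx /eqP sy;
  [left | right]; exists x, y; by rewrite -sx -sy.
Qed.

(* The blocks of the product are read off a labelling [chi] of X u X'' u X'
   that is constant along edges and agrees with [g1 \o b] on X''. *)
Lemma bpmul_fibres2 a b c d (g1 g2 : nat -> nat) :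
  (forall j, g1 (b j) = g2 (c j)) -> img_le a b -> img_le d c ->
  (forall j j', g1 (b j) = g1 (b j') ->
     connect (prod_edge (fibres2 a b) (fibres2 c d)) (mid j) (mid j')) ->
  bpmul (fibres2 a b) (fibres2 c d) = fibres2 (g1 \o a) (g2 \o d).
Proof.
move=> gbc ab dc conn_mid; set E := prod_edge (fibres2 a b) (fibres2 c d).
pose chi (u : upt n) := match u with
  | inl (inl i) => g1 (a i) | inl (inr j) => g1 (b j) | inr k => g2 (d k) end.
have chi_edge u v : E u v -> chi u = chi v.
  have chi_l x : chi (emb_l x) = g1 (lab2 a b x) by case: x.
  have chi_r x : chi (emb_r x) = g2 (lab2 c d x) by case: x => //= j; rewrite gbc.
  by case/prod_edge_fibresP => -[x [y [lxy -> ->]]]; rewrite ?chi_l ?chi_r lxy.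
have chi_connect u v : connect E u v -> chi u == chi v.
  move=> Euv; rewrite -[_ == _]/(v \in [pred w | chi u == chi w]).
  rewrite -(closed_connect _ Euv) ?inE //.
  by move=> w w' /chi_edge; rewrite !inE => ->.
have to_mid u : exists j, [/\ chi u = g1 (b j), connect E u (mid j) & connect E (mid j) u].
  case: u => [[i|j]|k] /=.
  - have [j abj] := ab i; exists j; rewrite abj; split => //; apply: connect1.
      by apply: (@prod_edge_fibresL _ _ (inl i) (inr j)).
    by apply: (@prod_edge_fibresL _ _ (inr j) (inl i)).
  - by exists j; split => //; apply: connect0.
  - have [j dcj] := dc k; exists j; rewrite dcj gbc; split => //; apply: connect1.
      by apply: (@prod_edge_fibresR _ _ (inr k) (inl j)).
    by apply: (@prod_edge_fibresR _ _ (inl j) (inr k)).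
rewrite [RHS]fibresE /bpmul -/E; apply: eq_imset => s; apply/setP => t; rewrite !inE.
have -> : lab2 (g1 \o a) (g2 \o d) s = chi (emb_o s) by case: s.
have -> : lab2 (g1 \o a) (g2 \o d) t = chi (emb_o t) by case: t.
apply/idP/eqP => [/chi_connect/eqP // | chi_st].
have [j [chi_s s_j _]] := to_mid (emb_o s); have [j' [chi_t _ j'_t]] := to_mid (emb_o t).
apply: connect_trans s_j _; apply: connect_trans _ j'_t.
by apply: conn_mid; rewrite -chi_s -chi_t.
Qed.

Lemma bpmul_fibres2_coarse a b c d (g : nat -> nat) :
  (forall j, b j = g (c j)) -> img_le a b -> img_le d c ->
  bpmul (fibres2 a b) (fibres2 c d) = fibres2 a (g \o d).
Proof.
move=> bgc ab dc; apply: (@bpmul_fibres2 _ _ _ _ id) => // j j' bjj'.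
by apply: connect1; apply: (@prod_edge_fibresL _ _ (inr j) (inr j')).
Qed.

Lemma bpmul_fibres2_same a b d : img_le a b -> img_le d b ->
  bpmul (fibres2 a b) (fibres2 b d) = fibres2 a d.
Proof. exact: (@bpmul_fibres2_coarse a b b d id). Qed.

Lemma connect_mid_glue a b c d i0 j0 j j' : c i0 = c j0 ->
  glue (b i0) (b j0) (b j) = glue (b i0) (b j0) (b j') ->
  connect (prod_edge (fibres2 a b) (fibres2 c d)) (mid j) (mid j').
Proof.
move=> ci0j0; set E := prod_edge _ _.
have stepL k k' : b k = b k' -> connect E (mid k) (mid k').
  by move=> bkk'; apply: connect1; apply: (@prod_edge_fibresL _ _ (inr k) (inr k')).
have i0_j0 : connect E (mid i0) (mid j0).
  by apply: connect1; apply: (@prod_edge_fibresR _ _ (inl i0) (inl j0)).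
have j0_i0 : connect E (mid j0) (mid i0).
  by apply: connect1; apply: (@prod_edge_fibresR _ _ (inl j0) (inl i0)).
rewrite /glue; case: eqP => bj; case: eqP => bj' bjj'.
- by apply: stepL; rewrite bj bj'.
- by apply: connect_trans (stepL _ _ bj) (connect_trans j0_i0 (stepL _ _ bjj')).
- by apply: connect_trans (stepL _ _ bjj') (connect_trans i0_j0 (stepL _ _ (esym bj'))).
- exact: stepL.
Qed.

Lemma fibres2_Istar a b : img_le a b -> img_le b a -> in_Istar (fibres2 a b).
Proof.
move=> ab ba; split; first exact: preim_partitionP.
rewrite /fibres2 fibresE => _ /imsetP [[i|j] _ ->].
- by have [j abj] := ab i; split; [exists i | exists j]; rewrite inE /= ?abj.
- by have [i bai] := ba j; split; [exists i | exists j]; rewrite inE /= ?bai.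
Qed.

Lemma idem_in_E psi : in_E (idem psi).
Proof.
split; first by apply: fibres2_Istar; apply: img_le_refl.
by apply: bpmul_fibres2_same; apply: img_le_refl.
Qed.

Lemma fibres2_inverse a b : img_le a b -> img_le b a ->
  is_inverse (fibres2 a b) (fibres2 b a).
Proof.
move=> ab ba; split; first exact: fibres2_Istar.
by rewrite !bpmul_fibres2_same //; apply: img_le_refl.
Qed.

Lemma rank_Istar_le (e : bp n) : in_Istar e -> rank e <= n.
Proof.
rewrite /rank; case=> /and3P [/eqP cov_e triv_e _] meet.
have -> : e = [set pblock e (inl i) | i : 'I_n].
  apply/setP => B; apply/idP/imsetP => [eB | [i _ ->]].
    by have [[i Bi] _] := meet B eB; exists i; rewrite // (def_pblock triv_e eB Bi).
  by apply: pblock_mem; rewrite cov_e inE.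
by apply: leq_trans (leq_imset_card _ _) _; rewrite card_ord.
Qed.

(* [e e = e] joins [inl a], [inl (inr i)] and [inr b] in one block of [e]
   whenever [inl a] shares a block with [inr i] and [inr b] one with [inl i]. *)
Lemma in_E_pblock_sym (e : bp n) i : in_E e -> pblock e (inl i) = pblock e (inr i).
Proof.
case=> [[/and3P [/eqP cov_e triv_e _] meet] ee].
have blk x : pblock e x \in e by apply: pblock_mem; rewrite cov_e inE.
have mem x : x \in pblock e x by rewrite mem_pblock cov_e inE.
have [[a ai] _] := meet _ (blk (inr i)); have [_ [b bi]] := meet _ (blk (inl i)).
pose K := [set t | connect (prod_edge e e) (emb_o (inl a)) (emb_o t)].
have eK : K \in e by rewrite -ee; apply: imset_f.
have Kb : inr b \in K.
  rewrite inE; apply: (@connect_trans _ _ (inl (inr i))); apply: connect1.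
    exact: (@prod_edgeL _ _ _ (inl a) (inr i) (blk (inr i))).
  exact: (@prod_edgeR _ _ _ (inl i) (inr b) (blk (inl i))).
have Ka : inl a \in K by rewrite inE connect0.
rewrite -(def_pblock triv_e (blk _) bi) (def_pblock triv_e eK Kb).
by rewrite -(def_pblock triv_e eK Ka) (def_pblock triv_e (blk _) ai).
Qed.

Lemma in_E_labels (e : bp n) :
  in_E e -> exists psi, e = idem psi /\ labels_onto psi (rank e).
Proof.
rewrite /rank; move=> Ee; have [[part_e meet] _] := Ee.
have [/eqP cov_e triv_e _] := and3P part_e.
pose psi i := index (pblock e (inl i)) (enum e).
have blk x : pblock e x \in enum e.
  by rewrite mem_enum; apply: pblock_mem; rewrite cov_e inE.
have psiE x : lab2 psi psi x = index (pblock e x) (enum e).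
  by case: x => // i; rewrite /= /psi in_E_pblock_sym.
exists psi; split.
  rewrite -[LHS](preim_partition_pblock part_e); apply: eq_fibres => x y.
  by rewrite !psiE; apply/eqP/eqP => [-> | /(index_inj set0 (blk x) (blk y))].
split=> [k | v]; first by rewrite cardE index_mem.
rewrite cardE => v_lt; have eB : nth set0 (enum e) v \in e by rewrite -mem_enum mem_nth.
have [[i Bi] _] := meet _ eB; exists i.
by rewrite /psi (def_pblock triv_e eB Bi) index_uniq ?enum_uniq.
Qed.

End Labellings.

Arguments one_block {n}.

Definition tswap (x y v : nat) : nat := if v == x then y else if v == y then x else v.

Lemma tswapK x y : involutive (tswap x y).
Proof.
move=> v; rewrite /tswap.
have [-> | vx] := eqVneq v x; first by rewrite eqxx; case: eqVneq.
have [-> | vy] := eqVneq v y; first by rewrite eqxx.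
by rewrite (negbTE vx) (negbTE vy).
Qed.

Lemma tswap_lt x y r v : x < r -> y < r -> v < r -> tswap x y v < r.
Proof. by rewrite /tswap => xr yr vr; case: ifP => _ //; case: ifP. Qed.

Lemma relabel_onto r m a b c d :
  m <= r -> a < r -> b < r -> a != b -> c < m -> d < m -> c != d ->
  exists h : nat -> nat, [/\ h a = c, h b = d, forall v, h v < m &
                             forall w, w < m -> exists2 v, v < r & h v = w].
Proof.
move=> mr ar br ab cm dm cd.
pose t1 := tswap a c; pose t2 := tswap (t1 b) d.
have t1a : t1 a = c by rewrite /t1 /tswap eqxx.
have t2c : t2 c = c.
  have t1b_c : c != t1 b by rewrite -t1a /t1 (inj_eq (can_inj (tswapK a c))).
  by rewrite /t2 /tswap (negbTE t1b_c) (negbTE cd).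
exists (fun v => minn (t2 (t1 v)) m.-1); split.
- by rewrite t1a t2c; lia.
- by rewrite /t2 /tswap eqxx; lia.
- by move=> v; lia.
move=> w wm; exists (t1 (t2 w)); last by rewrite /t1 tswapK /t2 tswapK; lia.
have t1br : t1 b < r by apply: tswap_lt => //; lia.
by apply: tswap_lt => //; [lia | apply: tswap_lt => //; lia].
Qed.

Lemma classic_ex_maxn (P : nat -> Prop) N :
  (forall m, P m -> m <= N) -> (exists m, P m) ->
  exists m, P m /\ forall m', P m' -> m' <= m.
Proof.
elim: N => [|N IH] P_le [m Pm].
  by exists m; split=> // m' /P_le; move: (P_le m Pm); lia.
have [PN | notPN] := classic (P N.+1); first by exists N.+1; split=> // m' /P_le.
apply: IH; last by exists m.
move=> m' Pm'; have := P_le m' Pm'; rewrite leq_eqVlt => /predU1P [m'N | //].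
by rewrite m'N in Pm'.
Qed.

Section NormalCongruence.
Variables (n : nat) (L : bp n -> bp n -> Prop).
Hypothesis normL : normal_congruence L.
Implicit Types (psi phi : 'I_n -> nat).

Let congr_in_E e f : L e f -> in_E e /\ in_E f.
Proof. by case: normL => [[+ _] _]; apply. Qed.

Let congr_refl e : in_E e -> L e e.
Proof. by case: normL => [[_ [+ _]] _]; apply. Qed.

Let congr_sym e f : L e f -> L f e.
Proof. by case: normL => [[_ [_ [+ _]]] _]; apply. Qed.

Let congr_trans f e g : L e f -> L f g -> L e g.
Proof. by case: normL => [[_ [_ [_ [+ _]]]] _]; apply. Qed.

Let congr_mulr e f g : L e f -> in_E g -> L (bpmul e g) (bpmul f g).
Proof. by case: normL => [[_ [_ [_ [_ mulL]]]] _] /mulL /[apply] -[]. Qed.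

Let congr_conj s t e f : in_Istar s -> is_inverse s t -> L e f ->
  L (bpmul (bpmul t e) s) (bpmul (bpmul t f) s).
Proof. by case: normL => _; apply. Qed.

(* Multiply on the right by the idempotent [idem chi] whose only non-singleton
   block is {i, j, i', j'}: it fixes [idem phi] and glues two blocks of [idem psi]. *)
Lemma congr_glue psi phi i j :
  L (idem psi) (idem phi) -> psi i != psi j -> phi i = phi j ->
  L (idem psi) (idem (glue (psi i) (psi j) \o psi)).
Proof.
move=> Lpsiphi psiij phiij.
have ij : i != j by apply: contraNneq psiij => ->.
pose chi (k : 'I_n) : nat := if k == j then i else k.
have chiK k : insubd j (chi k) = if k == j then i else k.
  by rewrite /chi; case: eqP => _; rewrite valKd.
have chiij : chi i = chi j by rewrite /chi eqxx (negbTE ij).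
set g := glue (psi i) (psi j).
have phi_chi k : phi k = phi (insubd j (chi k)) by rewrite chiK; case: eqP => [->|].
have psi_chi k : g (psi k) = g (psi (insubd j (chi k))).
  by rewrite chiK; case: eqP => [->|//]; rewrite /g /glue eqxx (negbTE psiij).
have := congr_mulr Lpsiphi (idem_in_E chi).
rewrite (@bpmul_fibres2_coarse _ phi phi chi chi (phi \o insubd j) phi_chi
  (img_le_refl _) (img_le_refl _)).
rewrite (@bpmul_fibres2 _ psi psi chi chi g (g \o psi \o insubd j) psi_chi
  (img_le_refl _) (img_le_refl _) (fun k k' => connect_mid_glue _ _ chiij)).
have -> : fibres2 phi (phi \o insubd j \o chi) = idem phi.
  by apply: eq_fibres2 => // k; rewrite /= -phi_chi.
have -> : fibres2 (g \o psi) (g \o psi \o insubd j \o chi) = idem (g \o psi).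
  by apply: eq_fibres2 => // k; rewrite /= -psi_chi.
by move=> Lglue; apply: congr_trans Lpsiphi (congr_sym Lglue).
Qed.

Definition gluings_related r := forall phi m c d,
  labels_onto phi m -> m <= r -> c < m -> d < m -> c != d ->
  L (idem phi) (idem (glue c d \o phi)).

(* Conjugate by [fibres2 xi phi], where [xi = h \o psi] relabels the blocks of
   [idem psi] onto those of [idem phi], sending the glued labels [a], [b] to [c], [d]. *)
Lemma gluings_related_of_glue psi r a b :
  labels_onto psi r -> a < r -> b < r -> a != b ->
  L (idem psi) (idem (glue a b \o psi)) -> gluings_related r.
Proof.
move=> [psi_lt psi_onto] ar br ab Lglue phi m c d [phi_lt phi_onto] mr cm dm cd.
have [h [hac hbd h_lt h_onto]] := relabel_onto mr ar br ab cm dm cd.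
pose xi := h \o psi.
have xi_onto : labels_onto xi m.
  split=> [k | w /h_onto [v /psi_onto [k <-] <-]]; [exact: h_lt | by exists k].
have phi_xi : img_le phi xi := img_le_onto phi_lt xi_onto.
have xi_phi : img_le xi phi := img_le_onto (fun k => h_lt _) (conj phi_lt phi_onto).
have [i0 psi_i0] := psi_onto a ar; have [j0 psi_j0] := psi_onto b br.
pose mu := glue a b \o psi; pose nu := glue c d.
have nu_xi k : nu (xi k) = (nu \o h) (mu k).
  rewrite /nu /mu /xi /= /glue; case: (psi k =P b) => [->|//].
  by rewrite hbd hac eqxx; case: eqP.
have mu_i0j0 : mu i0 = mu j0 by rewrite /mu /= psi_i0 psi_j0 /glue eqxx (negbTE ab).
have conn k k' : nu (xi k) = nu (xi k') ->
    connect (prod_edge (fibres2 phi xi) (fibres2 mu mu)) (mid k) (mid k').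
  move=> nu_kk'; apply: (connect_mid_glue _ _ mu_i0j0).
  by rewrite /xi /= psi_i0 psi_j0 hac hbd.
have nu_phi : img_le (nu \o phi) (nu \o h \o mu).
  by move=> k; have [k' phik] := phi_xi k; exists k'; rewrite /= phik nu_xi.
have := congr_conj (fibres2_Istar xi_phi phi_xi) (fibres2_inverse xi_phi phi_xi) Lglue.
rewrite (@bpmul_fibres2_coarse _ phi xi psi psi h (fun=> erefl) phi_xi (img_le_refl _)).
rewrite bpmul_fibres2_same //.
rewrite (bpmul_fibres2 nu_xi phi_xi (img_le_refl mu) conn).
by rewrite (@bpmul_fibres2_coarse _ _ _ xi phi nu (fun k => esym (nu_xi k)) nu_phi phi_xi).
Qed.

Lemma gluings_related_le1 r : r <= 1 -> gluings_related r.
Proof. by move=> r_le1 phi m c d _ mr cm dm /eqP cd; exfalso; lia. Qed.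

Lemma gluings_related_of_split psi phi r i j :
  labels_onto psi r -> L (idem psi) (idem phi) -> psi i != psi j -> phi i = phi j ->
  gluings_related r.
Proof.
move=> psi_r Lpsiphi psi_ij phi_ij.
apply: (gluings_related_of_glue psi_r (psi_r.1 i) (psi_r.1 j) psi_ij).
exact: congr_glue Lpsiphi psi_ij phi_ij.
Qed.

(* Truncating the labels at [k] gives a chain of single gluings from [idem psi]
   down to [one_block]. *)
Lemma congr_one_block_of_gluings r psi m :
  gluings_related r -> labels_onto psi m -> m <= r -> L (idem psi) one_block.
Proof.
move=> mergeL [psi_lt psi_onto] mr.
pose W k := idem (fun i => minn (psi i) k).
have W_step k : k.+2 <= m -> L (W k.+1) (W k).
  move=> km; have -> : W k = idem (glue k k.+1 \o (fun i => minn (psi i) k.+1)).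
    by rewrite /W; apply: eq_fibres2 => i /=; rewrite /glue; case: eqP; lia.
  apply: (mergeL _ k.+2); try lia.
  split=> [i | v vk]; first lia.
  by have [i psi_i] := psi_onto v (leq_trans vk km); exists i; rewrite psi_i; lia.
have W_one k : k <= m.-1 -> L (W k) one_block.
  elim: k => [_ | k IH km].
    have -> : W 0 = one_block by rewrite /W; apply: eq_fibres2 => i; rewrite /= minn0.
    exact: congr_refl (idem_in_E _).
  by apply: congr_trans (W_step k _) (IH _); lia.
have -> : idem psi = W m.-1 by rewrite /W; apply: eq_fibres2 => i; have := psi_lt i; lia.
exact: W_one.
Qed.

Lemma gluings_related_of_one_block psi r :
  L (idem psi) one_block -> labels_onto psi r -> gluings_related r.
Proof.
move=> Lpsi1 psi_r; have [r_le1 | r_gt1] := leqP r 1; first exact: gluings_related_le1.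
have [i0 psi_i0] := psi_r.2 0 (ltnW r_gt1); have [j0 psi_j0] := psi_r.2 1 r_gt1.
apply: (gluings_related_of_split psi_r Lpsi1 (i := i0) (j := j0)) => //.
by rewrite psi_i0 psi_j0.
Qed.

Lemma gluings_related_of_congr psi phi r r' :
  labels_onto psi r -> labels_onto phi r' ->
  L (idem psi) (idem phi) -> idem psi != idem phi -> gluings_related r.
Proof.
move=> psi_r phi_r' Lpsiphi psi_phi.
have [i [j split_ij]] : exists i j, (psi i == psi j) != (phi i == phi j).
  apply: NNPP => same; move/eqP: psi_phi; apply; apply: eq_fibres => -[i|i] [j|j] /=;
  case: ((psi i == psi j) =P (phi i == phi j)) => // split_ij;
  by case: same; exists i, j; apply/eqP.
have [psi_ij | psi_ij] := eqVneq (psi i) (psi j); last first.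
  apply: (gluings_related_of_split psi_r Lpsiphi psi_ij).
  by move: split_ij; rewrite (negbTE psi_ij); case: (phi i =P phi j).
have phi_ij : phi i != phi j by move: split_ij; rewrite psi_ij eqxx.
have merge_r' := gluings_related_of_split phi_r' (congr_sym Lpsiphi) phi_ij psi_ij.
apply: gluings_related_of_one_block psi_r.
exact: congr_trans Lpsiphi (congr_one_block_of_gluings merge_r' phi_r' (leqnn _)).
Qed.

Lemma gluings_related_of_neq e f : L e f -> e != f -> gluings_related (rank e).
Proof.
move=> Lef nef; have [Ee Ef] := congr_in_E Lef.
have [psi [def_e psi_e]] := in_E_labels Ee; have [phi [def_f phi_f]] := in_E_labels Ef.
by apply: (gluings_related_of_congr psi_e phi_f); rewrite -def_e -def_f.
Qed.

Lemma congr_one_block_of_rank r e :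
  gluings_related r -> in_E e -> rank e <= r -> L e one_block.
Proof.
move=> glue_r /in_E_labels [psi [def_e psi_e]] er; rewrite def_e.
exact: (congr_one_block_of_gluings glue_r psi_e er).
Qed.

End NormalCongruence.

Theorem mainTheorem20 (n : nat) (L : bp n -> bp n -> Prop) :
  1 <= n -> normal_congruence L ->
  exists k : nat, 1 <= k <= n /\
    (forall e f : bp n, L e f <->
       (in_E e /\ in_E f /\ (e = f \/ (rank e <= k /\ rank f <= k)))).
Proof.
move=> n_gt0 normL; have [[L_E [L_refl [L_sym [L_trans _]]]] _] := normL.
have [k [[glue_k k_le_n] k_max]] : exists k, (gluings_related L k /\ k <= n) /\
    forall m, gluings_related L m /\ m <= n -> m <= k.
  apply: (@classic_ex_maxn _ n) => [m [] // | ].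
  by exists 1; split; first exact: gluings_related_le1.
have rank_le_k e f : L e f -> e != f -> rank e <= k.
  move=> Lef nef; apply: k_max; split; first exact: (gluings_related_of_neq normL Lef nef).
  by have [[Ie _] _] := L_E _ _ Lef; apply: rank_Istar_le.
have one_block_k e : in_E e -> rank e <= k -> L e one_block.
  exact: (congr_one_block_of_rank normL glue_k).
exists k; split.
  by rewrite k_le_n andbT; apply: k_max; split; [exact: gluings_related_le1 | exact: n_gt0].
move=> e f; split=> [Lef | [Ee [Ef [-> | [ek fk]]]]]; last 2 first.
- exact: L_refl.
- exact: L_trans (one_block_k e Ee ek) (L_sym _ _ (one_block_k f Ef fk)).
have [Ee Ef] := L_E _ _ Lef; do 2!split=> //.
have [-> | nef] := eqVneq e f; [by left | right].
by split; [apply: rank_le_k Lef nef | apply: rank_le_k (L_sym _ _ Lef) _; rewrite eq_sym].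
Qed.
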